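(* Let $\alpha=[0;a_1,a_2,\ldots]\in\mathbf{Bad}$ and let $(p_n/q_n)_{n\ge1}$ be the sequence of its convergents. Assume that there exist a positive rational number $x$ and a sequence of finite words $(U_k)_{k\ge1}$ over the positive integers such that, for every $k\ge1$, the sequence of partial quotients $a_1a_2\ldots$ of $\alpha$ begins with the word $U_kU_k^x$, and $|U_{k+1}|>|U_k|$. Set $M=\limsup_{\ell\to+\infty}q_\ell^{1/\ell}$ and $m=\liminf_{\ell\to+\infty}q_\ell^{1/\ell}$. If $$x\ge1\quad\text{or}\quad x>\frac12\cdot\frac{\log M}{\log m},$$ then for every real number $\beta$ equal to $\alpha$ up to a rational homography one has $\inf_{q\ge1}q\cdot\Vert q\alpha\Vert\cdot\Vert q\beta\Vert=0$.
   Context: For a real number $y$, $\Vert y\Vert$ denotes the distance from $y$ to the nearest integer. $\mathbf{Bad}=\{\alpha\in\mathbb{R} : \inf_{q\ge1} q\Vert q\alpha\Vert>0\}$ (equivalently, real numbers with bounded partial quotients). A finite word $W=w_1\ldots w_r$ over the positive integers is identified with the sequence of partial quotients $w_1,\ldots,w_r$; $|W|$ denotes its length. For a positive rational $x$, $W^x$ denotes the word $W^{[x]}W'$, where $W^{[x]}$ is the concatenation of $[x]$ copies of $W$ and $W'$ is the prefix of $W$ of length $\lceil (x-[x])|W|\rceil$. A real number $\beta$ is equal to $\alpha$ up to a rational homography if $\beta=(a\alpha+b)/(c\alpha+d)$ for some integers $a,b,c,d$ with $ad-bc\neq0$. *)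

From Stdlib Require Import Reals List QArith Qround ZArith.
From Coquelicot Require Import Coquelicot.
Open Scope R_scope.

Definition dnint (y : R) : R :=
  let f := y - IZR (Int_part y) in Rmin f (1 - f).

(* Partial quotients are given as a : nat -> nat with  a k = a_(k+1),
   i.e. a 0 = a_1, a 1 = a_2, ... *)

(* denominators and numerators of convergents:
   qpair a n = (q_n, q_(n+1)), with q_0 = 1, q_1 = a_1,
   q_(n+2) = a_(n+2) q_(n+1) + q_n;  similarly p_0 = 0, p_1 = 1. *)
Fixpoint qpair (a : nat -> nat) (n : nat) : nat * nat :=
  match n with
  | O => (1%nat, a O)
  | S k => let (x, y) := qpair a k in (y, (a (S k) * y + x)%nat)
  end.
Fixpoint ppair (a : nat -> nat) (n : nat) : nat * nat :=
  match n with
  | O => (0%nat, 1%nat)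
  | S k => let (x, y) := ppair a k in (y, (a (S k) * y + x)%nat)
  end.
Definition conv_q (a : nat -> nat) (n : nat) : nat := fst (qpair a n).
Definition conv_p (a : nat -> nat) (n : nat) : nat := fst (ppair a n).

Definition is_cf_expansion (alpha : R) (a : nat -> nat) : Prop :=
  (forall k, (1 <= a k)%nat) /\
  is_lim_seq (fun n => INR (conv_p a n) / INR (conv_q a n)) alpha.

Definition Bad (alpha : R) : Prop :=
  exists c, 0 < c /\ forall q : nat, (1 <= q)%nat -> c <= INR q * dnint (INR q * alpha).

(* Word power W^x = W^[x] W' with W' the prefix of W of length
   ceil((x - [x]) |W|). *)
Definition word_pow (W : list nat) (x : Q) : list nat :=
  concat (repeat W (Z.to_nat (Qfloor x))) ++
  firstn (Z.to_nat (Qceiling ((x - inject_Z (Qfloor x)) * inject_Z (Z.of_nat (length W))))) W.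

Definition begins_with (a : nat -> nat) (W : list nat) : Prop :=
  forall i, (i < length W)%nat -> a i = nth i W 0%nat.

Definition homography_equiv (alpha beta : R) : Prop :=
  exists a b c d : Z, (a * d - b * c <> 0)%Z /\
    beta = (IZR a * alpha + IZR b) / (IZR c * alpha + IZR d).

From Stdlib Require Import Reals List QArith Qround ZArith Qreals Lia Lra Psatz Classical.
From Coquelicot Require Import Coquelicot.
Open Scope R_scope.

(* Write r = |U_k| and s = |U_k^x|. Since the partial quotients repeat after position r for s steps,
   alpha is an approximate root of q_(r-1) t^2 + (q_r - p_(r-1)) t - p_r, with error
   O(1 / (q_r q_s^2)). A homography carries this quadratic to a relation
   D beta = e Q alpha + F + O(1 / (q_r q_s^2)) with integers e, Q, F and |D| = O(q_r).
   If D = 0 this contradicts alpha in Bad once q_s is large. Otherwise, by pigeonhole, some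
   combination q = u q_N + v q_(N+1) (N = r + s - 1, |u|, |v| <= sqrt |D|) makes D divide e Q p + F q,
   and then q ||q alpha|| ||q beta|| = O(sqrt (q_r) / q_s). Finally, alpha in Bad gives finite
   exponential growth rates 1 < m <= M for q_n, and x >= 1 or 2 x log m > log M makes
   q_s^2 / q_r unbounded along the U_k. *)

Section Continuants.
Variable a : nat -> nat.

Lemma conv_q_SS n : conv_q a (S (S n)) = (a (S n) * conv_q a (S n) + conv_q a n)%nat.
Proof.
  unfold conv_q; simpl. destruct (qpair a n) as [x y]; reflexivity.
Qed.

Lemma conv_p_SS n : conv_p a (S (S n)) = (a (S n) * conv_p a (S n) + conv_p a n)%nat.
Proof.
  unfold conv_p; simpl. destruct (ppair a n) as [x y]; reflexivity.
Qed.

Lemma conv_det_Z n :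
  Z.abs (Z.of_nat (conv_p a (S n)) * Z.of_nat (conv_q a n)
         - Z.of_nat (conv_p a n) * Z.of_nat (conv_q a (S n))) = 1%Z.
Proof.
  induction n as [|n IH]; [reflexivity|].
  rewrite conv_q_SS, conv_p_SS, !Nat2Z.inj_add, !Nat2Z.inj_mul, <- IH, <- Z.abs_opp.
  f_equal. ring.
Qed.

Lemma conv_det n :
  Rabs (INR (conv_p a (S n)) * INR (conv_q a n) - INR (conv_p a n) * INR (conv_q a (S n))) = 1.
Proof.
  rewrite !INR_IZR_INZ, <- !mult_IZR, <- minus_IZR, <- abs_IZR, conv_det_Z. reflexivity.
Qed.

Hypothesis a_pos : forall k, (1 <= a k)%nat.

Lemma conv_bounds n :
  (1 <= conv_q a n <= conv_q a (S n) /\ conv_p a n <= conv_q a n /\ n <= conv_q a n)%nat /\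
  (conv_p a (S n) <= conv_q a (S n) /\ S n <= conv_q a (S n))%nat.
Proof.
  induction n as [|n IH].
  - pose proof (a_pos 0). cbv [conv_q conv_p qpair ppair fst]. lia.
  - rewrite conv_q_SS, conv_p_SS. pose proof (a_pos (S n)). nia.
Qed.

Lemma conv_q_pos n : (1 <= conv_q a n)%nat.
Proof. apply (conv_bounds n). Qed.

Lemma conv_q_le_succ n : (conv_q a n <= conv_q a (S n))%nat.
Proof. apply (conv_bounds n). Qed.

Lemma conv_p_le_q n : (conv_p a n <= conv_q a n)%nat.
Proof. apply (conv_bounds n). Qed.

Lemma conv_q_ge_index n : (n <= conv_q a n)%nat.
Proof. apply (conv_bounds n). Qed.

Lemma conv_q_le_mono m n : (m <= n)%nat -> (conv_q a m <= conv_q a n)%nat.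
Proof. induction 1 as [|n _ IH]; [lia|]. pose proof (conv_q_le_succ n). lia. Qed.

Lemma conv_q_double n : (2 * conv_q a n <= conv_q a (S (S n)))%nat.
Proof. rewrite conv_q_SS. pose proof (a_pos (S n)). pose proof (conv_q_le_succ n). nia. Qed.

Lemma INR_conv_q_ge1 n : 1 <= INR (conv_q a n).
Proof. apply (le_INR 1), conv_q_pos. Qed.

End Continuants.

Definition between (u v z : R) : Prop := Rmin u v <= z <= Rmax u v.

Lemma between_trans u v w z : between u v w -> between v w z -> between u v z.
Proof. unfold between, Rmin, Rmax. repeat destruct Rle_dec; lra. Qed.

Lemma mediant_between p0 q0 p1 q1 t : 0 < q0 -> 0 < q1 -> 0 <= t ->
  between (p0 / q0) (p1 / q1) ((t * p1 + p0) / (t * q1 + q0)).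
Proof.
  intros Hq0 Hq1 Ht.
  assert (E0 : (t * p1 + p0) / (t * q1 + q0) - p0 / q0
               = t * (p1 * q0 - p0 * q1) / (q0 * (t * q1 + q0))) by (field; split; apply Rgt_not_eq; nra).
  assert (E1 : p1 / q1 - (t * p1 + p0) / (t * q1 + q0)
               = (p1 * q0 - p0 * q1) / (q1 * (t * q1 + q0))) by (field; split; apply Rgt_not_eq; nra).
  assert (Hd0 : 0 < / (q0 * (t * q1 + q0))) by (apply Rinv_0_lt_compat, Rmult_lt_0_compat; nra).
  assert (Hd1 : 0 < / (q1 * (t * q1 + q0))) by (apply Rinv_0_lt_compat, Rmult_lt_0_compat; nra).
  unfold Rdiv in E0, E1. set (d := p1 * q0 - p0 * q1) in *.
  destruct (Rle_dec 0 d) as [Hd|Hd].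
  - assert (0 <= t * d * / (q0 * (t * q1 + q0))) by (apply Rmult_le_pos; nra).
    assert (0 <= d * / (q1 * (t * q1 + q0))) by (apply Rmult_le_pos; lra).
    unfold between, Rmin, Rmax. repeat destruct Rle_dec; lra.
  - assert (t * d * / (q0 * (t * q1 + q0)) <= 0) by (apply Rmult_le_0_r; nra).
    assert (d * / (q1 * (t * q1 + q0)) <= 0) by (apply Rmult_le_0_r; lra).
    unfold between, Rmin, Rmax. repeat destruct Rle_dec; lra.
Qed.

Lemma is_lim_seq_between (u : nat -> R) (l lo hi : R) n :
  (forall m, (n <= m)%nat -> lo <= u m <= hi) -> is_lim_seq u l -> lo <= l <= hi.
Proof.
  intros Hb Hl. split.
  - apply (is_lim_seq_le_loc (fun _ => lo) u lo l); [|apply is_lim_seq_const|exact Hl].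
    exists n. intros m Hm. apply Hb, Hm.
  - apply (is_lim_seq_le_loc u (fun _ => hi) l hi); [|exact Hl|apply is_lim_seq_const].
    exists n. intros m Hm. apply Hb, Hm.
Qed.

Definition convergent (a : nat -> nat) (n : nat) : R := INR (conv_p a n) / INR (conv_q a n).

Section Approximation.
Variable a : nat -> nat.
Hypothesis a_pos : forall k, (1 <= a k)%nat.

Lemma convergent_between_SS n :
  between (convergent a n) (convergent a (S n)) (convergent a (S (S n))).
Proof.
  unfold convergent. rewrite conv_q_SS, conv_p_SS, !plus_INR, !mult_INR.
  pose proof (INR_conv_q_ge1 a a_pos n). pose proof (INR_conv_q_ge1 a a_pos (S n)).
  apply mediant_between; [lra|lra|apply pos_INR].
Qed.

Lemma convergent_between n k :
  between (convergent a n) (convergent a (S n)) (convergent a (n + k)).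
Proof.
  revert n. induction k as [|k IH]; intros n.
  - rewrite Nat.add_0_r. unfold between, Rmin, Rmax. destruct Rle_dec; lra.
  - replace (n + S k)%nat with (S n + k)%nat by lia.
    eapply between_trans; [apply convergent_between_SS|apply IH].
Qed.

Lemma convergent_gap n :
  Rabs (convergent a (S n) - convergent a n)
  = / (INR (conv_q a n) * INR (conv_q a (S n))).
Proof.
  pose proof (INR_conv_q_ge1 a a_pos n). pose proof (INR_conv_q_ge1 a a_pos (S n)).
  rewrite <- (Rmult_1_l (/ _)), <- (conv_det a n), <- (Rabs_pos_eq (/ _)) by
    (apply Rlt_le, Rinv_0_lt_compat; nra).
  rewrite <- Rabs_mult. f_equal. unfold convergent. field. lra.
Qed.

Variable alpha : R.
Hypothesis alpha_lim : is_lim_seq (convergent a) alpha.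

Lemma alpha_between n : between (convergent a n) (convergent a (S n)) alpha.
Proof.
  apply (is_lim_seq_between (convergent a) alpha _ _ n); [|exact alpha_lim].
  intros m Hm. replace m with (n + (m - n))%nat by lia. apply convergent_between.
Qed.

Lemma alpha_in_unit : 0 <= alpha <= 1.
Proof.
  pose proof (alpha_between 0) as H. unfold between, convergent in H.
  cbv [conv_q conv_p qpair ppair fst] in H. simpl INR in H.
  assert (1 <= INR (a 0)) by (apply (le_INR 1), a_pos).
  assert (0 < / INR (a 0) <= 1).
  { split; [apply Rinv_0_lt_compat; lra|rewrite <- Rinv_1; apply Rinv_le_contravar; lra]. }
  unfold Rdiv in H. rewrite Rmult_0_l, Rmult_1_l in H.
  unfold Rmin, Rmax in H. destruct Rle_dec; lra.
Qed.

Lemma alpha_sub_convergent n :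
  Rabs (alpha - convergent a n) <= / (INR (conv_q a n) * INR (conv_q a (S n))).
Proof.
  rewrite <- convergent_gap. pose proof (alpha_between n) as H.
  unfold between, Rmin, Rmax in H. unfold Rabs.
  repeat destruct Rle_dec; repeat destruct Rcase_abs; lra.
Qed.

Lemma conv_approx n :
  Rabs (INR (conv_q a n) * alpha - INR (conv_p a n)) <= / INR (conv_q a (S n)).
Proof.
  pose proof (INR_conv_q_ge1 a a_pos n). pose proof (INR_conv_q_ge1 a a_pos (S n)).
  replace (INR (conv_q a n) * alpha - INR (conv_p a n))
    with (INR (conv_q a n) * (alpha - convergent a n)) by (unfold convergent; field; lra).
  rewrite Rabs_mult, Rabs_pos_eq by lra.
  apply Rmult_le_reg_l with (/ INR (conv_q a n)); [apply Rinv_0_lt_compat; lra|].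
  rewrite <- Rmult_assoc, Rinv_l, Rmult_1_l, <- Rinv_mult by lra.
  apply alpha_sub_convergent.
Qed.

End Approximation.

Lemma conv_shift (a : nat -> nat) (r n : nat) :
  (forall j, (j < n)%nat -> a (S r + j)%nat = a j) ->
  conv_q a (S r + n) = (conv_q a r * conv_p a n + conv_q a (S r) * conv_q a n)%nat /\
  conv_p a (S r + n) = (conv_p a r * conv_p a n + conv_p a (S r) * conv_q a n)%nat.
Proof.
  set (P := fun n => conv_q a (S r + n) = (conv_q a r * conv_p a n + conv_q a (S r) * conv_q a n)%nat /\
    conv_p a (S r + n) = (conv_p a r * conv_p a n + conv_p a (S r) * conv_q a n)%nat).
  assert (P0 : P 0%nat) by (unfold P; rewrite Nat.add_0_r; cbv [conv_q conv_p qpair ppair fst]; lia).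
  assert (Hpair : forall m, (forall j, (j < S m)%nat -> a (S r + j)%nat = a j) -> P m /\ P (S m)).
  { induction m as [|m IH]; intros Hj.
    - split; [exact P0|]. unfold P.
      assert (Ha0 : a (S r) = a 0%nat) by (rewrite <- (Hj 0%nat), Nat.add_0_r by lia; reflexivity).
      rewrite Nat.add_1_r, conv_q_SS, conv_p_SS, Ha0.
      cbv [conv_q conv_p qpair ppair fst]. lia.
    - destruct IH as [[Hq0 Hp0] [Hq1 Hp1]]; [intros j Hlt; apply Hj; lia|].
      split; [split; assumption|]. unfold P.
      replace (S r + S (S m))%nat with (S (S (S r + m))) by lia.
      rewrite !conv_q_SS, !conv_p_SS, <- Nat.add_succ_r, Hq0, Hp0, Hq1, Hp1, (Hj (S m)) by lia.
      split; ring. }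
  intros Hj. destruct n as [|m]; [exact P0|]. apply (Hpair m Hj).
Qed.

Lemma length_concat_repeat (W : list nat) f : length (concat (repeat W f)) = (f * length W)%nat.
Proof. induction f as [|f IH]; simpl; [reflexivity|]. rewrite length_app, IH. lia. Qed.

Lemma nth_concat_repeat_firstn (W : list nat) f c i :
  (0 < length W)%nat -> (i < length (concat (repeat W f) ++ firstn c W))%nat ->
  nth i (concat (repeat W f) ++ firstn c W) 0%nat = nth (i mod length W) W 0%nat.
Proof.
  intros HW. revert i. induction f as [|f IH]; intros i Hi.
  - simpl in *. rewrite length_firstn in Hi. rewrite nth_firstn, Nat.mod_small by lia.
    destruct (Nat.ltb_spec i c); [reflexivity|lia].
  - simpl in *. rewrite <- app_assoc in *. rewrite length_app in Hi.
    destruct (Nat.ltb_spec i (length W)).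
    + rewrite app_nth1, Nat.mod_small by lia. reflexivity.
    + rewrite app_nth2, IH by lia.
      replace i with ((i - length W) + 1 * length W)%nat at 2 by lia.
      rewrite Nat.Div0.mod_add. reflexivity.
Qed.

Lemma nth_word_pow (W : list nat) x i : (i < length (word_pow W x))%nat ->
  nth i (word_pow W x) 0%nat = nth (i mod length W) W 0%nat.
Proof.
  unfold word_pow. intros Hi. destruct W as [|w W].
  - rewrite length_app, length_concat_repeat, length_firstn in Hi. simpl in Hi. lia.
  - apply nth_concat_repeat_firstn; [simpl; lia|exact Hi].
Qed.

Lemma length_word_pow_ge (W : list nat) x : (0 < x)%Q ->
  Q2R x * INR (length W) <= INR (length (word_pow W x)).
Proof.
  intros Hx. unfold word_pow. rewrite length_app, length_concat_repeat, length_firstn.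
  set (f := Qfloor x).
  set (c := Qceiling ((x - inject_Z f) * inject_Z (Z.of_nat (length W)))).
  assert (Hf1 := Qfloor_le x). assert (Hf2 := Qlt_floor x).
  assert (Hc := Qle_ceiling ((x - inject_Z f) * inject_Z (Z.of_nat (length W)))).
  fold f in Hf1, Hf2, Hc. apply Qle_Rle in Hf1, Hc. apply Qlt_Rlt in Hf2, Hx.
  rewrite Q2R_mult, Q2R_minus in Hc. unfold Q2R in Hx, Hf1, Hf2, Hc. simpl in Hx, Hf1, Hf2, Hc.
  rewrite <- INR_IZR_INZ, Rinv_1, !Rmult_1_r in Hc. rewrite Rinv_1, Rmult_1_r in Hf1.
  rewrite Rinv_1, Rmult_1_r, plus_IZR in Hf2. rewrite Rmult_0_l in Hx. fold c in Hc. fold (Q2R x) in *.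
  assert (HW : 0 <= INR (length W)) by apply pos_INR.
  assert (Hf0 : (0 <= f)%Z) by (cut (-1 < f)%Z; [lia|apply lt_IZR; simpl; lra]).
  assert (Hc0 : (0 <= c)%Z) by (apply le_IZR; nra).
  rewrite plus_INR, mult_INR, (INR_IZR_INZ (Z.to_nat f)), Z2Nat.id by exact Hf0.
  destruct (Nat.le_ge_cases (Z.to_nat c) (length W)).
  - rewrite Nat.min_l, (INR_IZR_INZ (Z.to_nat c)), Z2Nat.id by lia. nra.
  - rewrite Nat.min_r by lia. nra.
Qed.

Lemma begins_with_shift (a : nat -> nat) (U : list nat) (x : Q) :
  begins_with a (U ++ word_pow U x) ->
  forall j, (j < length (word_pow U x))%nat -> a (length U + j)%nat = a j.
Proof.
  intros Hb.
  assert (Hrep : forall i, (i < length (word_pow U x))%nat ->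
            a (length U + i)%nat = nth (i mod length U) U 0%nat).
  { intros i Hi. rewrite Hb by (rewrite length_app; lia).
    rewrite app_nth2, Nat.add_comm, Nat.add_sub by lia. apply nth_word_pow, Hi. }
  intros j Hj. destruct (Nat.lt_ge_cases j (length U)).
  - rewrite Hrep, Hb, app_nth1, Nat.mod_small by (try rewrite length_app; lia). reflexivity.
  - rewrite Hrep by exact Hj.
    replace j with (length U + (j - length U))%nat at 2 by lia.
    rewrite Hrep by lia.
    replace j with ((j - length U) + 1 * length U)%nat at 1 by lia.
    rewrite Nat.Div0.mod_add. reflexivity.
Qed.

Lemma dnint_nonneg y : 0 <= dnint y.
Proof. unfold dnint, Rmin. pose proof (base_Int_part y). destruct Rle_dec; lra. Qed.

Lemma dnint_le_dist y z : dnint y <= Rabs (y - IZR z).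
Proof.
  unfold dnint. pose proof (base_Int_part y) as [H1 H2]. set (n := Int_part y) in *.
  destruct (Z_le_gt_dec z n) as [Hz|Hz].
  - apply IZR_le in Hz. eapply Rle_trans; [apply Rmin_l|]. rewrite Rabs_pos_eq; lra.
  - assert (IZR (n + 1) <= IZR z) by (apply IZR_le; lia). rewrite plus_IZR in H.
    eapply Rle_trans; [apply Rmin_r|]. rewrite Rabs_left1; lra.
Qed.

Section Repetition.
Variable a : nat -> nat.
Hypothesis a_pos : forall k, (1 <= a k)%nat.
Variables r s : nat.
Hypothesis shift : forall j, (j < s)%nat -> a (S r + j)%nat = a j.

Lemma conv_shift_INR :
  INR (conv_q a (S r + s)) = INR (conv_q a r) * INR (conv_p a s) + INR (conv_q a (S r)) * INR (conv_q a s) /\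
  INR (conv_p a (S r + s)) = INR (conv_p a r) * INR (conv_p a s) + INR (conv_p a (S r)) * INR (conv_q a s).
Proof.
  destruct (conv_shift a r s shift) as [Hq Hp].
  rewrite Hq, Hp, !plus_INR, !mult_INR. split; reflexivity.
Qed.

Lemma conv_q_shift_bounds :
  INR (conv_q a (S r)) * INR (conv_q a s) <= INR (conv_q a (S r + s))
  <= 2 * INR (conv_q a (S r)) * INR (conv_q a s).
Proof.
  rewrite (proj1 conv_shift_INR).
  assert (INR (conv_q a r) <= INR (conv_q a (S r))) by apply le_INR, conv_q_le_succ, a_pos.
  assert (INR (conv_p a s) <= INR (conv_q a s)) by apply le_INR, conv_p_le_q, a_pos.
  pose proof (pos_INR (conv_q a r)). pose proof (pos_INR (conv_p a s)).
  pose proof (pos_INR (conv_q a (S r))). split; nra.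
Qed.

Variable alpha : R.
Hypothesis alpha_lim : is_lim_seq (convergent a) alpha.

Let qR : R := INR (conv_q a r).
Let pR : R := INR (conv_p a r).
Let qr : R := INR (conv_q a (S r)).
Let pr : R := INR (conv_p a (S r)).
Let qs : R := INR (conv_q a s).
Let ps : R := INR (conv_p a s).
Let Nq : R := INR (conv_q a (S r + s)).
Let Np : R := INR (conv_p a (S r + s)).
Let w : R := / (qr * qs ^ 2).

Lemma repetition_approximations :
  Rabs (alpha - Np / Nq) <= w / qr /\ Rabs (alpha - ps / qs) <= w * qr /\
  Rabs (qR * alpha - pR) <= w * qs ^ 2.
Proof.
  pose proof conv_q_shift_bounds as [HN _]. fold qr qs Nq in HN.
  assert (Hqr : 1 <= qr) by apply INR_conv_q_ge1, a_pos.
  assert (Hqs : 1 <= qs) by apply INR_conv_q_ge1, a_pos.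
  pose proof (le_INR _ _ (conv_q_le_succ a a_pos (S r + s))) as HN1. fold Nq in HN1.
  pose proof (le_INR _ _ (conv_q_le_succ a a_pos s)) as Hs1. fold qs in Hs1.
  assert (Hy : Rabs (alpha - Np / Nq) <= w / qr).
  { eapply Rle_trans; [apply (alpha_sub_convergent a a_pos alpha alpha_lim)|].
    fold Nq. assert (0 < qr * qs) by nra.
    unfold w, Rdiv. rewrite <- Rinv_mult. replace (qr * qs ^ 2 * qr) with ((qr * qs) * (qr * qs)) by ring.
    apply Rinv_le_contravar; [nra|]. apply Rmult_le_compat; lra. }
  assert (Hxs : Rabs (alpha - ps / qs) <= w * qr).
  { eapply Rle_trans; [apply (alpha_sub_convergent a a_pos alpha alpha_lim)|].
    fold qs. assert (E : w * qr = / (qs * qs)) by (unfold w; field; lra). rewrite E.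
    apply Rinv_le_contravar; [nra|]. apply Rmult_le_compat_l; lra. }
  assert (E : w * qs ^ 2 = / qr) by (unfold w; field; lra). rewrite E.
  split; [exact Hy|split; [exact Hxs|apply conv_approx; assumption]].
Qed.

Lemma quadratic_residual_small :
  Rabs (qR * alpha ^ 2 + (qr - pR) * alpha - pr) <= 8 / (qr * qs ^ 2).
Proof.
  destruct conv_shift_INR as [HNq HNp]. fold qR pR qr pr qs ps Nq Np in HNq, HNp.
  destruct repetition_approximations as [Hay [Hax HaR]].
  assert (HqR : pR <= qR <= qr)
    by (split; apply le_INR; [apply conv_p_le_q|apply conv_q_le_succ]; exact a_pos).
  assert (Hqr : 1 <= qr) by apply INR_conv_q_ge1, a_pos.
  assert (Hqs : 1 <= qs) by apply INR_conv_q_ge1, a_pos.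
  assert (0 <= pR /\ 0 <= ps) as [HpR Hps] by (split; apply pos_INR).
  assert (Hy : 0 <= Np / Nq <= 1).
  { assert (Np <= Nq) by apply le_INR, conv_p_le_q, a_pos.
    assert (0 <= Np) by apply pos_INR. assert (0 < Nq) by nra.
    split; [apply Rdiv_le_0_compat; lra|]. apply (Rdiv_le_1 Np Nq); lra. }
  pose proof (alpha_in_unit a a_pos alpha alpha_lim) as Hal.
  assert (Hw : 0 < w) by (apply Rinv_0_lt_compat; nra).
  assert (Hwqs : w <= w * qs ^ 2) by (rewrite <- (Rmult_1_r w) at 1; apply Rmult_le_compat_l; nra).
  (* [Np / Nq] is the image of [ps / qs] under the Moebius map [z => (pR z + pr) / (qR z + qr)]
     of the repeated block, and alpha is close to both. *)
  assert (Hid : qR * alpha ^ 2 + (qr - pR) * alpha - pr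
                = (qR * (Np / Nq) - pR) * (Np / Nq - ps / qs)
                  + (alpha - Np / Nq) * (qR * (alpha + Np / Nq) + qr - pR)).
  { rewrite HNp, HNq. field. split; apply Rgt_not_eq; nra. }
  set (y := Np / Nq) in *. set (xs := ps / qs) in *.
  assert (B1 : Rabs (qR * y - pR) <= 2 * w * qs ^ 2).
  { replace (qR * y - pR) with ((qR * alpha - pR) - qR * (alpha - y)) by ring.
    eapply Rle_trans; [apply Rabs_triang|]. rewrite Rabs_Ropp, Rabs_mult, (Rabs_pos_eq qR) by lra.
    assert (Hy' : qR * Rabs (alpha - y) <= qr * (w / qr))
      by (apply Rmult_le_compat; try apply Rabs_pos; lra).
    replace (qr * (w / qr)) with w in Hy' by (field; lra). lra. }
  assert (B2 : Rabs (y - xs) <= 2 * w * qr).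
  { replace (y - xs) with ((alpha - xs) - (alpha - y)) by ring.
    eapply Rle_trans; [apply Rabs_triang|]. rewrite Rabs_Ropp.
    assert (/ qr <= 1) by (rewrite <- Rinv_1; apply Rinv_le_contravar; lra).
    assert (w / qr <= w * qr) by (apply Rmult_le_compat_l; lra). lra. }
  assert (B3 : Rabs (qR * (alpha + y) + qr - pR) <= 3 * qr) by (rewrite Rabs_pos_eq; nra).
  replace (8 / (qr * qs ^ 2)) with (8 * w) by (unfold w; field; nra).
  assert (Hwq : w * (qr * qs ^ 2) = 1) by (unfold w; field; nra).
  rewrite Hid. eapply Rle_trans; [apply Rabs_triang|]. rewrite !Rabs_mult.
  assert (P1 : Rabs (qR * y - pR) * Rabs (y - xs) <= (2 * w * qs ^ 2) * (2 * w * qr))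
    by (apply Rmult_le_compat; try apply Rabs_pos; lra).
  assert (P2 : Rabs (alpha - y) * Rabs (qR * (alpha + y) + qr - pR) <= (w / qr) * (3 * qr))
    by (apply Rmult_le_compat; try apply Rabs_pos; lra).
  replace ((w / qr) * (3 * qr)) with (3 * w) in P2 by (field; lra).
  nra.
Qed.

End Repetition.

Lemma pigeonhole_mod (M A B : Z) (K : nat) :
  (0 < M)%Z -> (M < Z.of_nat (S K * S K))%Z ->
  exists u v : Z, (u <> 0 \/ v <> 0)%Z /\ (Z.abs u <= Z.of_nat K)%Z /\
    (Z.abs v <= Z.of_nat K)%Z /\ (M | u * A + v * B)%Z.
Proof.
  intros HM HK. apply NNPP. intros Hnone.
  set (g := fun t : nat => (Z.of_nat (t / S K) * A + Z.of_nat (t mod S K) * B)%Z).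
  set (f := fun t : nat => Z.to_nat (g t mod M)).
  assert (Hinj : NoDup (map f (seq 0 (S K * S K)))).
  { apply NoDup_map_NoDup_ForallPairs; [|apply seq_NoDup].
    intros t1 t2 H1 H2 Hf. apply in_seq in H1, H2. unfold f in Hf.
    pose proof (Z.mod_pos_bound (g t1) M HM). pose proof (Z.mod_pos_bound (g t2) M HM).
    apply Z2Nat.inj in Hf; try lia.
    assert (Hdiv : (M | g t1 - g t2)%Z).
    { apply Z.mod_divide; [lia|]. rewrite Zminus_mod, Hf, Z.sub_diag. reflexivity. }
    assert (t1 / S K < S K /\ t2 / S K < S K)%nat as [Hq1 Hq2]
      by (split; apply Nat.Div0.div_lt_upper_bound; lia).
    pose proof (Nat.mod_upper_bound t1 (S K)). pose proof (Nat.mod_upper_bound t2 (S K)).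
    destruct (classic (t1 / S K = t2 / S K /\ t1 mod S K = t2 mod S K)%nat) as [[E1 E2]|Hne].
    - rewrite (Nat.div_mod_eq t1 (S K)), (Nat.div_mod_eq t2 (S K)), E1, E2. reflexivity.
    - exfalso. apply Hnone.
      exists (Z.of_nat (t1 / S K) - Z.of_nat (t2 / S K))%Z,
             (Z.of_nat (t1 mod S K) - Z.of_nat (t2 mod S K))%Z.
      repeat split; try lia.
      replace (_ * A + _ * B)%Z with (g t1 - g t2)%Z by (unfold g; ring). exact Hdiv. }
  assert (Hincl : incl (map f (seq 0 (S K * S K))) (seq 0 (Z.to_nat M))).
  { intros y Hy. apply in_map_iff in Hy. destruct Hy as [t [<- _]].
    apply in_seq. unfold f. pose proof (Z.mod_pos_bound (g t) M HM). lia. }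
  pose proof (NoDup_incl_length Hinj Hincl) as Hlen.
  rewrite length_map, !length_seq in Hlen. lia.
Qed.

Lemma combination_nonzero (qN qN1 pN pN1 u v K : Z) :
  Z.abs (pN1 * qN - pN * qN1) = 1%Z -> (0 <= K < qN1)%Z ->
  (u <> 0 \/ v <> 0)%Z -> (Z.abs u <= K)%Z -> (u * qN + v * qN1 <> 0)%Z.
Proof.
  intros Hdet HK Huv Hu Hq.
  set (pz := (u * pN + v * pN1)%Z).
  assert (Hu' : (pz * qN1 = - u * (pN1 * qN - pN * qN1))%Z).
  { transitivity (pz * qN1 - (u * qN + v * qN1) * pN1)%Z; [rewrite Hq; ring|unfold pz; ring]. }
  assert (Habs : (Z.abs pz * qN1 = Z.abs u)%Z).
  { rewrite <- (Z.abs_eq qN1), <- Z.abs_mul, Hu', Z.abs_mul, Hdet, Z.abs_opp by lia. ring. }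
  assert (Hp : pz = 0%Z) by nia. rewrite Hp in Habs.
  assert (u = 0)%Z by lia. subst u. nia.
Qed.

Lemma small_positive_combination (qN qN1 pN pN1 M A B : Z) :
  Z.abs (pN1 * qN - pN * qN1) = 1%Z -> (M <> 0)%Z -> (Z.sqrt (Z.abs M) < qN1)%Z ->
  exists u v : Z, (Z.abs u <= Z.sqrt (Z.abs M))%Z /\ (Z.abs v <= Z.sqrt (Z.abs M))%Z /\
    (0 < u * qN + v * qN1)%Z /\ (M | u * A + v * B)%Z.
Proof.
  intros Hdet HM HK. set (K := Z.sqrt (Z.abs M)) in *.
  assert (HK0 : (0 <= K)%Z) by apply Z.sqrt_nonneg.
  destruct (Z.sqrt_spec (Z.abs M)) as [_ HKM]; [lia|]. fold K in HKM.
  destruct (pigeonhole_mod (Z.abs M) A B (Z.to_nat K)) as [u [v [Huv [Hu [Hv Hdiv]]]]];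
    [lia|rewrite Nat2Z.inj_mul, Nat2Z.inj_succ, Z2Nat.id by lia; lia|].
  rewrite Z2Nat.id in Hu, Hv by lia. apply (proj1 (Z.divide_abs_l _ _)) in Hdiv.
  pose proof (combination_nonzero qN qN1 pN pN1 u v K Hdet ltac:(lia) Huv Hu) as Hnz.
  destruct (Z_lt_le_dec 0 (u * qN + v * qN1)) as [Hpos|Hneg].
  - exists u, v. repeat split; assumption.
  - exists (Z.opp u), (Z.opp v). repeat split; try lia.
    replace (- u * A + - v * B)%Z with (- (u * A + v * B))%Z by ring.
    apply Z.divide_opp_r, Hdiv.
Qed.

Section Combination.
Variable a : nat -> nat.
Hypothesis a_pos : forall k, (1 <= a k)%nat.
Variable alpha : R.
Hypothesis alpha_lim : is_lim_seq (convergent a) alpha.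

Lemma convergent_combination N (M G1 G2 : Z) :
  (M <> 0)%Z -> (Z.sqrt (Z.abs M) < Z.of_nat (conv_q a (S N)))%Z ->
  exists p q : Z, (0 < q)%Z /\
    IZR q <= 2 * IZR (Z.sqrt (Z.abs M)) * INR (conv_q a (S N)) /\
    Rabs (IZR q * alpha - IZR p) <= 2 * IZR (Z.sqrt (Z.abs M)) / INR (conv_q a (S N)) /\
    (M | G1 * p + G2 * q)%Z.
Proof.
  intros HM HK.
  set (K := Z.sqrt (Z.abs M)) in *.
  set (qN := Z.of_nat (conv_q a N)) in *. set (qN1 := Z.of_nat (conv_q a (S N))) in *.
  set (pN := Z.of_nat (conv_p a N)). set (pN1 := Z.of_nat (conv_p a (S N))).
  destruct (small_positive_combination qN qN1 pN pN1 M (G1 * pN + G2 * qN) (G1 * pN1 + G2 * qN1)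
              (conv_det_Z a N) HM HK) as [u [v [Hu [Hv [Hq Hdiv]]]]].
  exists (u * pN + v * pN1)%Z, (u * qN + v * qN1)%Z.
  assert (HqN : (0 <= qN <= qN1)%Z) by (pose proof (conv_q_le_succ a a_pos N); lia).
  assert (EN1 : INR (conv_q a (S N)) = IZR qN1) by apply INR_IZR_INZ.
  fold K in Hu, Hv. rewrite EN1. split; [exact Hq|split; [|split]].
  - rewrite <- !mult_IZR. apply IZR_le.
    assert (u <= K /\ v <= K)%Z by lia. nia.
  - assert (HaN : Rabs (IZR qN * alpha - IZR pN) <= / IZR qN1).
    { unfold qN, pN. rewrite <- !INR_IZR_INZ, <- EN1. apply conv_approx; assumption. }
    assert (HaN1 : Rabs (IZR qN1 * alpha - IZR pN1) <= / IZR qN1).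
    { unfold qN1 at 1, pN1. rewrite <- !INR_IZR_INZ, <- EN1.
      eapply Rle_trans; [apply conv_approx; assumption|].
      pose proof (INR_conv_q_ge1 a a_pos (S N)).
      apply Rinv_le_contravar; [lra|apply le_INR, conv_q_le_succ, a_pos]. }
    replace (IZR (u * qN + v * qN1) * alpha - IZR (u * pN + v * pN1))
      with (IZR u * (IZR qN * alpha - IZR pN) + IZR v * (IZR qN1 * alpha - IZR pN1))
      by (rewrite !plus_IZR, !mult_IZR; ring).
    eapply Rle_trans; [apply Rabs_triang|]. rewrite !Rabs_mult, <- !abs_IZR.
    assert (IZR (Z.abs u) * Rabs (IZR qN * alpha - IZR pN) <= IZR K * / IZR qN1)
      by (apply Rmult_le_compat; try apply Rabs_pos; try (apply IZR_le; lia); assumption).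
    assert (IZR (Z.abs v) * Rabs (IZR qN1 * alpha - IZR pN1) <= IZR K * / IZR qN1)
      by (apply Rmult_le_compat; try apply Rabs_pos; try (apply IZR_le; lia); assumption).
    unfold Rdiv. lra.
  - replace (G1 * (u * pN + v * pN1) + G2 * (u * qN + v * qN1))%Z
      with (u * (G1 * pN + G2 * qN) + v * (G1 * pN1 + G2 * qN1))%Z by ring.
    exact Hdiv.
Qed.

End Combination.

Lemma beta_error_arith (K E c cd Q qr qs Nq q eta delta : R) :
  0 <= K -> 0 <= E -> 0 <= c -> 0 < cd -> 0 <= Q <= qr -> 1 <= qr -> 1 <= qs ->
  qr * qs <= Nq <= 2 * qr * qs -> 0 <= q <= 2 * K * Nq -> Rabs eta <= 2 * K / Nq ->
  Rabs delta <= 8 / (qr * qs ^ 2) ->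
  E * Q * Rabs eta + E * c * q * Rabs delta / cd <= 2 * K * (E * (1 + 16 * c / cd)) / qs.
Proof.
  intros HK HE Hc Hcd HQ Hqr Hqs HN Hq Heta Hdelta.
  assert (HNpos : 0 < Nq) by nra.
  assert (H1 : Q * Rabs eta <= 2 * K / qs).
  { apply Rle_trans with (qr * (2 * K / Nq)); [apply Rmult_le_compat; try apply Rabs_pos; lra|].
    unfold Rdiv. rewrite <- Rmult_assoc, (Rmult_comm qr), Rmult_assoc.
    apply Rmult_le_compat_l; [lra|].
    apply Rmult_le_reg_l with (qs * Nq); [nra|].
    field_simplify; [nra|lra|lra]. }
  assert (H2 : q * Rabs delta <= 32 * K / qs).
  { apply Rle_trans with ((2 * K * Nq) * (8 / (qr * qs ^ 2)));
      [apply Rmult_le_compat; try apply Rabs_pos; lra|].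
    apply Rle_trans with ((2 * K * (2 * qr * qs)) * (8 / (qr * qs ^ 2))).
    - apply Rmult_le_compat_r; [apply Rdiv_le_0_compat; nra|]. apply Rmult_le_compat_l; lra.
    - right. field. lra. }
  assert (E * (Q * Rabs eta) <= E * (2 * K / qs)) by (apply Rmult_le_compat_l; lra).
  assert (E * c * (q * Rabs delta) / cd <= E * c * (32 * K / qs) / cd).
  { unfold Rdiv. apply Rmult_le_compat_r; [apply Rlt_le, Rinv_0_lt_compat; lra|].
    apply Rmult_le_compat_l; [nra|lra]. }
  replace (2 * K * (E * (1 + 16 * c / cd)) / qs) with (E * (2 * K / qs) + E * c * (32 * K / qs) / cd)
    by (field; lra).
  replace (E * Q * Rabs eta) with (E * (Q * Rabs eta)) by ring.
  replace (E * c * q * Rabs delta / cd) with (E * c * (q * Rabs delta) / cd) by (field; lra).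
  lra.
Qed.

Lemma simultaneous_error_arith (K Dabs L G qs Nq q d1 d2 : R) :
  0 <= K -> K * K <= Dabs -> K * K <= L -> 0 < Nq -> 0 < qs -> 0 <= G ->
  0 <= q <= 2 * K * Nq -> 0 <= d1 <= 2 * K / Nq -> 0 <= d2 -> Dabs * d2 <= 2 * K * G / qs ->
  (q * d1 * d2) ^ 2 <= 64 * L * G ^ 2 / qs ^ 2.
Proof.
  intros HK HKD HKL HN Hqs HG Hq Hd1 Hd2 HDd2.
  assert (Hqd1 : q * d1 <= 4 * K * K).
  { apply Rle_trans with ((2 * K * Nq) * (2 * K / Nq)); [apply Rmult_le_compat; lra|].
    right. field. lra. }
  assert (0 <= 8 * K * G / qs) by (apply Rdiv_le_0_compat; [apply Rmult_le_pos|]; lra).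
  assert (Hprod : q * d1 * d2 <= 8 * K * G / qs).
  { destruct (Req_dec K 0) as [HK0|HK0].
    { subst K. replace q with 0 by lra. lra. }
    assert (HD : 0 < Dabs) by nra.
    apply Rmult_le_reg_r with Dabs; [exact HD|].
    replace (q * d1 * d2 * Dabs) with ((q * d1) * (Dabs * d2)) by ring.
    apply Rle_trans with ((4 * K * K) * (2 * K * G / qs));
      [apply Rmult_le_compat; try nra; apply Rmult_le_pos; nra|].
    replace ((4 * K * K) * (2 * K * G / qs)) with ((K * K) * (8 * K * G / qs)) by (field; lra).
    rewrite (Rmult_comm (8 * K * G / qs)). apply Rmult_le_compat_r; lra. }
  assert (0 <= q * d1 * d2) by (apply Rmult_le_pos; [apply Rmult_le_pos|]; lra).
  apply Rle_trans with ((8 * K * G / qs) ^ 2); [apply pow_incr; lra|].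
  replace ((8 * K * G / qs) ^ 2) with (64 * (K * K) * G ^ 2 / qs ^ 2) by (field; lra).
  unfold Rdiv. apply Rmult_le_compat_r; [apply Rlt_le, Rinv_0_lt_compat; nra|].
  apply Rmult_le_compat_r; [apply pow2_ge_0|lra].
Qed.

(* With e = a d - b c, D and F are chosen so that D (a t + b) / (c t + d) = e Q t + F whenever
   Q t^2 + B t - C = 0: an approximate root of the quadratic is sent to an approximately affine
   function of itself. *)
Definition homography_lead (c d Q B C : Z) : Z := d * d * Q - c * d * B - c * c * C.
Definition homography_offset (a b c d Q B C : Z) : Z := b * d * Q - a * c * C - b * c * B.

Lemma homography_quadratic_identity (za zb zc zd Q B C : Z) (t : R) :
  IZR (homography_lead zc zd Q B C) * (IZR za * t + IZR zb)
  - (IZR (za * zd - zb * zc) * IZR Q * t + IZR (homography_offset za zb zc zd Q B C))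
    * (IZR zc * t + IZR zd)
  = - IZR (za * zd - zb * zc) * IZR zc * (IZR Q * t ^ 2 + IZR B * t - IZR C).
Proof. unfold homography_lead, homography_offset. rewrite !minus_IZR, !mult_IZR. ring. Qed.

Lemma homography_lead_bound (zc zd Q B C : Z) (X : R) :
  0 <= IZR Q <= X -> 0 <= IZR B <= X -> 0 <= IZR C <= X ->
  Rabs (IZR (homography_lead zc zd Q B C))
  <= (IZR zd ^ 2 + Rabs (IZR zc * IZR zd) + IZR zc ^ 2) * X.
Proof.
  intros HQ HB HC. unfold homography_lead. rewrite !minus_IZR, !mult_IZR.
  eapply Rle_trans; [apply Rabs_triang|]. rewrite Rabs_Ropp.
  eapply Rle_trans; [apply Rplus_le_compat_r, Rabs_triang|]. rewrite Rabs_Ropp.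
  rewrite (Rabs_pos_eq (IZR zd * IZR zd * IZR Q)) by (apply Rmult_le_pos; nra).
  rewrite (Rabs_pos_eq (IZR zc * IZR zc * IZR C)) by (apply Rmult_le_pos; nra).
  rewrite Rabs_mult, (Rabs_pos_eq (IZR B)) by lra.
  assert (IZR zd * IZR zd * IZR Q <= IZR zd * IZR zd * X) by (apply Rmult_le_compat_l; nra).
  assert (IZR zc * IZR zc * IZR C <= IZR zc * IZR zc * X) by (apply Rmult_le_compat_l; nra).
  assert (Rabs (IZR zc * IZR zd) * IZR B <= Rabs (IZR zc * IZR zd) * X)
    by (apply Rmult_le_compat_l; [apply Rabs_pos|lra]).
  simpl pow. lra.
Qed.

Section Homography.
Variables alpha kappa : R.
Hypothesis kappa_pos : 0 < kappa.
Hypothesis bad : forall q : nat, (1 <= q)%nat -> kappa <= INR q * dnint (INR q * alpha).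

Lemma bad_int_lower (q z : Z) :
  (q <> 0)%Z -> kappa <= Rabs (IZR q) * Rabs (IZR q * alpha - IZR z).
Proof.
  intros Hq. eapply Rle_trans; [apply (bad (Z.abs_nat q)); lia|].
  rewrite INR_IZR_INZ, Zabs2Nat.id_abs, abs_IZR.
  apply Rmult_le_compat_l; [apply Rabs_pos|].
  destruct (Z_lt_le_dec 0 q) as [Hp|Hn].
  - rewrite Rabs_pos_eq by (apply IZR_le; lia). apply dnint_le_dist.
  - rewrite Rabs_left1 by (apply IZR_le; lia).
    eapply Rle_trans; [apply (dnint_le_dist _ (- z))|].
    rewrite <- Rabs_Ropp, opp_IZR. right. f_equal. ring.
Qed.

Variables za zb zc zd : Z.
Hypothesis det_nz : (za * zd - zb * zc <> 0)%Z.

Lemma homography_denominator_pos : 0 < Rabs (IZR zc * alpha + IZR zd).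
Proof.
  apply Rabs_pos_lt. intros H0.
  destruct (Z.eq_dec zc 0) as [->|Hc].
  - rewrite Rmult_0_l, Rplus_0_l in H0. apply eq_IZR in H0. subst zd. lia.
  - pose proof (bad_int_lower zc (- zd) Hc) as Hk.
    replace (IZR zc * alpha - IZR (- zd)) with (IZR zc * alpha + IZR zd) in Hk
      by (rewrite opp_IZR; ring).
    rewrite H0, Rabs_R0, Rmult_0_r in Hk. lra.
Qed.

Let beta : R := (IZR za * alpha + IZR zb) / (IZR zc * alpha + IZR zd).
Let cd : R := Rabs (IZR zc * alpha + IZR zd).
Let e : Z := (za * zd - zb * zc)%Z.

Lemma homography_affine_error (Q B C p q m : Z) :
  (e * Q * p + homography_offset za zb zc zd Q B C * q = m * homography_lead zc zd Q B C)%Z ->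
  IZR (homography_lead zc zd Q B C) * (IZR q * beta - IZR m)
  = IZR e * IZR Q * (IZR q * alpha - IZR p)
    - IZR e * IZR zc * IZR q * (IZR Q * alpha ^ 2 + IZR B * alpha - IZR C) / (IZR zc * alpha + IZR zd).
Proof.
  intros Hm. pose proof homography_denominator_pos as Hcd. fold cd in Hcd.
  assert (Hnz : IZR zc * alpha + IZR zd <> 0)
    by (intros H0; unfold cd in Hcd; rewrite H0, Rabs_R0 in Hcd; lra).
  pose proof (homography_quadratic_identity za zb zc zd Q B C alpha) as Hid. fold e in Hid.
  apply (f_equal IZR) in Hm. rewrite !plus_IZR, !mult_IZR in Hm.
  set (D := homography_lead zc zd Q B C) in *. set (F := homography_offset za zb zc zd Q B C) in *.
  set (delta := IZR Q * alpha ^ 2 + IZR B * alpha - IZR C) in *.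
  assert (Hbeta : IZR D * beta
                  = IZR e * IZR Q * alpha + IZR F - IZR e * IZR zc * delta / (IZR zc * alpha + IZR zd)).
  { apply Rmult_eq_reg_r with (IZR zc * alpha + IZR zd); [|exact Hnz].
    unfold beta. field_simplify; [|exact Hnz|exact Hnz]. lra. }
  replace (IZR D * (IZR q * beta - IZR m)) with (IZR q * (IZR D * beta) - IZR m * IZR D) by ring.
  rewrite Hbeta, <- Hm. unfold Rdiv. ring.
Qed.

Let c' : R := IZR zd ^ 2 + Rabs (IZR zc * IZR zd) + IZR zc ^ 2.
Let G : R := Rabs (IZR e) * (1 + 16 * Rabs (IZR zc) / cd).

Lemma G_nonneg : 0 <= G.
Proof.
  pose proof homography_denominator_pos as Hcd. fold cd in Hcd. pose proof (Rabs_pos (IZR zc)).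
  apply Rmult_le_pos; [apply Rabs_pos|].
  assert (0 <= 16 * Rabs (IZR zc) / cd) by (apply Rdiv_le_0_compat; lra). lra.
Qed.

Variable a : nat -> nat.
Hypothesis a_pos : forall k, (1 <= a k)%nat.
Hypothesis alpha_lim : is_lim_seq (convergent a) alpha.

Section AtRepetition.
Variables r s : nat.
Hypothesis shift : forall j, (j < s)%nat -> a (S r + j)%nat = a j.

Let Q : Z := Z.of_nat (conv_q a r).
Let B : Z := (Z.of_nat (conv_q a (S r)) - Z.of_nat (conv_p a r))%Z.
Let C : Z := Z.of_nat (conv_p a (S r)).
Let D : Z := homography_lead zc zd Q B C.
Let F : Z := homography_offset za zb zc zd Q B C.
Let qr : R := INR (conv_q a (S r)).
Let qs : R := INR (conv_q a s).
Let Nq : R := INR (conv_q a (S r + s)).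
Let delta : R := IZR Q * alpha ^ 2 + IZR B * alpha - IZR C.

Lemma delta_small : Rabs delta <= 8 / (qr * qs ^ 2).
Proof.
  unfold delta, Q, B, C, qr, qs. rewrite minus_IZR, <- !INR_IZR_INZ.
  apply quadratic_residual_small; assumption.
Qed.

Lemma coefficient_bounds : 1 <= IZR Q <= qr /\ 0 <= IZR B <= qr /\ 0 <= IZR C <= qr.
Proof.
  unfold Q, B, C, qr. rewrite minus_IZR, <- !INR_IZR_INZ.
  pose proof (INR_conv_q_ge1 a a_pos r).
  pose proof (le_INR _ _ (conv_q_le_succ a a_pos r)).
  pose proof (le_INR _ _ (conv_p_le_q a a_pos r)).
  pose proof (le_INR _ _ (conv_p_le_q a a_pos (S r))).
  pose proof (pos_INR (conv_p a r)). pose proof (pos_INR (conv_p a (S r))). lra.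
Qed.

Lemma degenerate_case : D = 0%Z -> kappa * cd * qs ^ 2 <= 8 * IZR e ^ 2 * Rabs (IZR zc).
Proof.
  intros HD. destruct coefficient_bounds as [HQ _].
  pose proof (homography_quadratic_identity za zb zc zd Q B C alpha) as Hid.
  fold e D F delta in Hid. rewrite HD, Rmult_0_l, Rminus_0_l in Hid.
  set (w := IZR e * IZR Q * alpha + IZR F) in Hid.
  assert (Hw : Rabs w * cd = Rabs (IZR e) * Rabs (IZR zc) * Rabs delta).
  { unfold cd. rewrite <- Rabs_mult, <- !Rabs_mult. f_equal. lra. }
  assert (HeQ : (e * Q <> 0)%Z) by (apply Z.neq_mul_0; split; [exact det_nz|]; intros H0;
                                    rewrite H0 in HQ; simpl in HQ; lra).
  pose proof (bad_int_lower (e * Q) (- F) HeQ) as Hk.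
  replace (IZR (e * Q) * alpha - IZR (- F)) with w in Hk by (unfold w; rewrite opp_IZR, mult_IZR; ring).
  rewrite mult_IZR, Rabs_mult, (Rabs_pos_eq (IZR Q)) in Hk by lra.
  pose proof delta_small as Hdelta. pose proof homography_denominator_pos as Hcd. fold cd in Hcd.
  assert (Hqs : 1 <= qs) by apply INR_conv_q_ge1, a_pos.
  assert (HQd : IZR Q * Rabs delta * qs ^ 2 <= 8).
  { apply Rle_trans with (qr * (8 / (qr * qs ^ 2)) * qs ^ 2).
    - apply Rmult_le_compat_r; [nra|]. apply Rmult_le_compat; try apply Rabs_pos; lra.
    - right. field. split; nra. }
  assert (Hkcd : kappa * cd <= Rabs (IZR e) ^ 2 * Rabs (IZR zc) * (IZR Q * Rabs delta)).
  { apply Rle_trans with (Rabs (IZR e) * IZR Q * Rabs w * cd); [apply Rmult_le_compat_r; lra|].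
    right. rewrite Rmult_assoc, Hw. ring. }
  rewrite <- (pow2_abs (IZR e)).
  assert (0 <= Rabs (IZR e) ^ 2 * Rabs (IZR zc)) by (apply Rmult_le_pos; [apply pow2_ge_0|apply Rabs_pos]).
  apply Rle_trans with (Rabs (IZR e) ^ 2 * Rabs (IZR zc) * (IZR Q * Rabs delta * qs ^ 2)).
  - replace (Rabs (IZR e) ^ 2 * Rabs (IZR zc) * (IZR Q * Rabs delta * qs ^ 2))
      with (Rabs (IZR e) ^ 2 * Rabs (IZR zc) * (IZR Q * Rabs delta) * qs ^ 2) by ring.
    apply Rmult_le_compat_r; [nra|exact Hkcd].
  - apply Rle_trans with (Rabs (IZR e) ^ 2 * Rabs (IZR zc) * 8); [apply Rmult_le_compat_l; lra|].
    right. ring.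
Qed.

Lemma beta_distance_bound (K p q m : Z) :
  (e * Q * p + F * q = m * D)%Z -> (0 <= K)%Z -> 0 <= IZR q <= 2 * IZR K * Nq ->
  Rabs (IZR q * alpha - IZR p) <= 2 * IZR K / Nq ->
  Rabs (IZR D) * Rabs (IZR q * beta - IZR m) <= 2 * IZR K * G / qs.
Proof.
  intros Hm HK Hq Heta.
  destruct coefficient_bounds as [HQ _]. pose proof homography_denominator_pos as Hcd. fold cd in Hcd.
  pose proof (homography_affine_error Q B C p q m Hm) as Hbm. fold D delta in Hbm.
  rewrite <- Rabs_mult, Hbm.
  eapply Rle_trans; [apply Rabs_triang|]. rewrite Rabs_Ropp.
  unfold Rdiv. rewrite !Rabs_mult, Rabs_inv, (Rabs_pos_eq (IZR Q)), (Rabs_pos_eq (IZR q)) by lra.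
  fold cd. unfold G.
  assert (Hqr : 1 <= qr) by apply INR_conv_q_ge1, a_pos.
  assert (Hqs : 1 <= qs) by apply INR_conv_q_ge1, a_pos.
  pose proof (conv_q_shift_bounds a a_pos r s shift) as HN.
  pose proof delta_small as Hdelta. pose proof (IZR_le _ _ HK) as HKr.
  apply (beta_error_arith (IZR K) _ _ _ (IZR Q) qr qs Nq); try apply Rabs_pos; assumption || lra.
Qed.

Lemma sqrt_lead_bounds : c' < qs ->
  IZR (Z.sqrt (Z.abs D)) * IZR (Z.sqrt (Z.abs D)) <= c' * qr /\
  (Z.sqrt (Z.abs D) < Z.of_nat (conv_q a (S (r + s))))%Z.
Proof.
  intros Hqs. destruct coefficient_bounds as [HQ [HB HC]].
  assert (HDc : Rabs (IZR D) <= c' * qr) by (apply homography_lead_bound; lra).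
  pose proof (conv_q_shift_bounds a a_pos r s shift) as HN. fold qr qs Nq in HN.
  assert (Hqr : 1 <= qr) by apply INR_conv_q_ge1, a_pos.
  destruct (Z.sqrt_spec (Z.abs D)) as [HK2 _]; [lia|].
  assert (HK0 : (0 <= Z.sqrt (Z.abs D))%Z) by apply Z.sqrt_nonneg.
  split.
  - rewrite <- mult_IZR. apply Rle_trans with (IZR (Z.abs D)); [apply IZR_le; lia|].
    rewrite abs_IZR. exact HDc.
  - assert (HDN : (Z.abs D < Z.of_nat (conv_q a (S (r + s))))%Z).
    { apply lt_IZR. rewrite abs_IZR, <- INR_IZR_INZ, <- Nat.add_succ_l. fold Nq. nra. }
    nia.
Qed.

Lemma nondegenerate_case : D <> 0%Z -> c' < qs ->
  exists q : nat, (1 <= q)%nat /\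
    (INR q * dnint (INR q * alpha) * dnint (INR q * beta)) ^ 2 <= 64 * c' * G ^ 2 * qr / qs ^ 2.
Proof.
  intros HD Hqs. destruct (sqrt_lead_bounds Hqs) as [HKc HKN].
  destruct (convergent_combination a a_pos alpha alpha_lim (r + s) D (e * Q) F HD HKN)
    as [p [q [Hq [Hqb [Heta [m Hm]]]]]].
  set (K := Z.sqrt (Z.abs D)) in *. assert (HK0 : (0 <= K)%Z) by apply Z.sqrt_nonneg.
  rewrite <- Nat.add_succ_l in Hqb, Heta. fold Nq in Hqb, Heta.
  exists (Z.to_nat q). split; [lia|]. rewrite INR_IZR_INZ, Z2Nat.id by lia.
  pose proof (conv_q_shift_bounds a a_pos r s shift) as HN. fold qr qs Nq in HN.
  assert (Hqr : 1 <= qr) by apply INR_conv_q_ge1, a_pos.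
  assert (Hqs1 : 1 <= qs) by apply INR_conv_q_ge1, a_pos.
  assert (HKD : IZR K * IZR K <= Rabs (IZR D)).
  { rewrite <- mult_IZR, <- abs_IZR. apply IZR_le. apply Z.sqrt_spec. lia. }
  assert (Hd2 : Rabs (IZR D) * dnint (IZR q * beta) <= 2 * IZR K * G / qs).
  { eapply Rle_trans; [apply Rmult_le_compat_l; [apply Rabs_pos|apply (dnint_le_dist _ m)]|].
    apply (beta_distance_bound K p q m Hm HK0); [split; [apply IZR_le; lia|]|]; assumption. }
  replace (64 * c' * G ^ 2 * qr / qs ^ 2) with (64 * (c' * qr) * G ^ 2 / qs ^ 2) by (unfold Rdiv; ring).
  assert (Hd1 : 0 <= dnint (IZR q * alpha) <= 2 * IZR K / Nq)
    by (split; [apply dnint_nonneg|]; eapply Rle_trans; [apply dnint_le_dist|exact Heta]).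
  apply (simultaneous_error_arith (IZR K) (Rabs (IZR D)) (c' * qr) G qs Nq);
    [apply IZR_le, HK0|exact HKD|exact HKc|nra|lra|apply G_nonneg| |exact Hd1|apply dnint_nonneg|exact Hd2].
  split; [apply IZR_le; lia|exact Hqb].
Qed.

Lemma repetition_trichotomy :
  kappa * cd * qs ^ 2 <= 8 * IZR e ^ 2 * Rabs (IZR zc) \/ qs <= c' \/
  exists q : nat, (1 <= q)%nat /\
    (INR q * dnint (INR q * alpha) * dnint (INR q * beta)) ^ 2 <= 64 * c' * G ^ 2 * qr / qs ^ 2.
Proof.
  destruct (Z.eq_dec D 0) as [HD|HD]; [left; apply degenerate_case, HD|right].
  destruct (Rle_lt_dec qs c') as [Hqs|Hqs]; [left; exact Hqs|right].
  apply nondegenerate_case; assumption.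
Qed.

End AtRepetition.

Lemma repetition_small_product :
  exists M : R, 0 < M /\ forall r s : nat, (forall j, (j < s)%nat -> a (S r + j)%nat = a j) ->
    M <= INR (conv_q a s) ->
    exists q : nat, (1 <= q)%nat /\
      (INR q * dnint (INR q * alpha) * dnint (INR q * beta)) ^ 2 * INR (conv_q a s) ^ 2
      <= M * INR (conv_q a (S r)).
Proof.
  pose proof homography_denominator_pos as Hcd. fold cd in Hcd.
  set (T := 8 * IZR e ^ 2 * Rabs (IZR zc) / (kappa * cd)).
  assert (HT : 0 <= T).
  { apply Rdiv_le_0_compat; [|nra]. pose proof (Rabs_pos (IZR zc)). pose proof (pow2_ge_0 (IZR e)). nra. }
  assert (Hc' : 0 <= c') by (unfold c'; pose proof (Rabs_pos (IZR zc * IZR zd)); nra).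
  assert (HG : 0 <= 64 * c' * G ^ 2) by (pose proof (pow2_ge_0 G); nra).
  exists (1 + c' + T + 64 * c' * G ^ 2). split; [lra|]. intros r s Hshift Hqs.
  assert (Hqs1 : 1 <= INR (conv_q a s)) by apply INR_conv_q_ge1, a_pos.
  destruct (repetition_trichotomy r s Hshift) as [Hdeg|[Hsmall|[q [Hq Hbound]]]].
  - exfalso. assert (T * (kappa * cd) = 8 * IZR e ^ 2 * Rabs (IZR zc)) by (unfold T; field; lra).
    assert (T < INR (conv_q a s) ^ 2) by nra.
    assert (T * (kappa * cd) < INR (conv_q a s) ^ 2 * (kappa * cd)) by (apply Rmult_lt_compat_r; nra).
    nra.
  - exfalso. lra.
  - exists q. split; [exact Hq|].
    apply Rle_trans with (64 * c' * G ^ 2 * INR (conv_q a (S r))).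
    + replace (64 * c' * G ^ 2 * INR (conv_q a (S r)))
        with (64 * c' * G ^ 2 * INR (conv_q a (S r)) / INR (conv_q a s) ^ 2 * INR (conv_q a s) ^ 2)
        by (field; lra).
      apply Rmult_le_compat_r; [apply pow2_ge_0|exact Hbound].
    + apply Rmult_le_compat_r; [apply pos_INR|lra].
Qed.

End Homography.

Lemma ln_le_inv x y : 0 < x -> 0 < y -> ln x <= ln y -> x <= y.
Proof.
  intros Hx Hy H. destruct (Rle_lt_dec x y) as [Hle|Hlt]; [exact Hle|].
  pose proof (ln_increasing y x Hy Hlt). lra.
Qed.

Definition conv_root (a : nat -> nat) (l : nat) : R := Rpower (INR (conv_q a l)) (/ INR l).

Section GrowthRate.
Variable a : nat -> nat.
Hypothesis a_pos : forall k, (1 <= a k)%nat.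

Lemma conv_root_pos l : 0 < conv_root a l.
Proof. apply exp_pos. Qed.

Lemma ln_conv_root l : (1 <= l)%nat -> ln (conv_root a l) * INR l = ln (INR (conv_q a l)).
Proof.
  intros Hl. assert (0 < INR l) by (apply lt_0_INR; lia).
  unfold conv_root. rewrite ln_Rpower. field. lra.
Qed.

Lemma conv_q_pow4_ge l : (2 <= l)%nat -> (2 ^ l <= conv_q a l ^ 4)%nat.
Proof.
  induction l as [l IH] using lt_wf_ind. intros Hl.
  destruct l as [|[|[|[|l]]]]; try lia.
  - pose proof (conv_q_ge_index a a_pos 2). simpl. nia.
  - pose proof (conv_q_ge_index a a_pos 3). simpl. nia.
  - assert (H2 : (2 ^ S (S l) <= conv_q a (S (S l)) ^ 4)%nat) by (apply IH; lia).
    assert (H16 : (16 * conv_q a (S (S l)) ^ 4 <= conv_q a (S (S (S (S l)))) ^ 4)%nat).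
    { replace (16 * conv_q a (S (S l)) ^ 4)%nat with ((2 * conv_q a (S (S l))) ^ 4)%nat by (simpl; ring).
      apply Nat.pow_le_mono_l, conv_q_double, a_pos. }
    rewrite !Nat.pow_succ_r' in *. lia.
Qed.

Lemma conv_root_ge l : (2 <= l)%nat -> exp (ln 2 / 4) <= conv_root a l.
Proof.
  intros Hl. apply ln_le_inv; [apply exp_pos|apply conv_root_pos|]. rewrite ln_exp.
  assert (Hl0 : 0 < INR l) by (apply lt_0_INR; lia).
  apply Rmult_le_reg_r with (4 * INR l); [lra|].
  replace (ln (conv_root a l) * (4 * INR l)) with (4 * (ln (conv_root a l) * INR l)) by ring.
  rewrite ln_conv_root by lia.
  pose proof (le_INR _ _ (conv_q_pow4_ge l Hl)) as H. rewrite !pow_INR in H.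
  apply ln_le in H; [|apply pow_lt; simpl; lra].
  pose proof (INR_conv_q_ge1 a a_pos l).
  rewrite !ln_pow in H by (simpl; lra).
  replace (INR 2) with 2 in H by (simpl; lra). replace (INR 4) with 4 in H by (simpl; lra).
  replace (ln 2 / 4 * (4 * INR l)) with (INR l * ln 2) by (field; lra). lra.
Qed.

Variables alpha kappa : R.
Hypothesis alpha_lim : is_lim_seq (convergent a) alpha.
Hypothesis kappa_pos : 0 < kappa.
Hypothesis bad : forall q : nat, (1 <= q)%nat -> kappa <= INR q * dnint (INR q * alpha).

Lemma bad_conv_q_succ n : kappa * INR (conv_q a (S n)) <= INR (conv_q a n).
Proof.
  pose proof (INR_conv_q_ge1 a a_pos n). pose proof (INR_conv_q_ge1 a a_pos (S n)).
  assert (Hk : kappa <= INR (conv_q a n) * / INR (conv_q a (S n))).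
  { eapply Rle_trans; [apply bad, conv_q_pos, a_pos|]. apply Rmult_le_compat_l; [lra|].
    eapply Rle_trans; [apply (dnint_le_dist _ (Z.of_nat (conv_p a n)))|].
    rewrite <- INR_IZR_INZ. apply conv_approx; assumption. }
  apply Rmult_le_compat_r with (r := INR (conv_q a (S n))) in Hk; [|lra].
  rewrite Rmult_assoc, Rinv_l, Rmult_1_r in Hk by lra. exact Hk.
Qed.

Lemma conv_root_le l : (1 <= l)%nat -> conv_root a l <= / kappa.
Proof.
  intros Hl. apply ln_le_inv; [apply conv_root_pos|apply Rinv_0_lt_compat, kappa_pos|].
  assert (Hl0 : 0 < INR l) by (apply lt_0_INR; lia).
  apply Rmult_le_reg_r with (INR l); [exact Hl0|]. rewrite ln_conv_root by exact Hl.
  clear Hl Hl0. rewrite Rmult_comm. induction l as [|l IH].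
  - cbv [conv_q qpair fst]. simpl INR. rewrite ln_1. lra.
  - pose proof (bad_conv_q_succ l). pose proof (INR_conv_q_ge1 a a_pos l).
    pose proof (INR_conv_q_ge1 a a_pos (S l)).
    assert (INR (conv_q a (S l)) <= INR (conv_q a l) * / kappa).
    { apply Rmult_le_reg_l with kappa; [exact kappa_pos|].
      replace (kappa * (INR (conv_q a l) * / kappa)) with (INR (conv_q a l)) by (field; lra). lra. }
    apply ln_le in H2; [|lra]. rewrite ln_mult in H2 by (try apply Rinv_0_lt_compat; lra).
    rewrite S_INR. lra.
Qed.

End GrowthRate.

Lemma LimSup_LimInf_finite (u : nat -> R) (lo hi : R) (N : nat) :
  (forall n, (N <= n)%nat -> lo <= u n <= hi) ->
  exists M m : R, LimSup_seq u = Finite M /\ LimInf_seq u = Finite m /\ lo <= m <= M /\ M <= hi.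
Proof.
  intros Hb.
  assert (Hsup : Rbar_le (LimSup_seq u) hi).
  { rewrite <- (LimSup_seq_const hi). apply LimSup_le. exists N. intros n Hn. apply Hb, Hn. }
  assert (Hinf : Rbar_le lo (LimInf_seq u)).
  { rewrite <- (LimInf_seq_const lo). apply LimInf_le. exists N. intros n Hn. apply Hb, Hn. }
  pose proof (LimSup_LimInf_seq_le u) as Hle.
  destruct (LimSup_seq u) as [M| |], (LimInf_seq u) as [m| |]; simpl in *; try contradiction.
  exists M, m. repeat split; assumption.
Qed.

Lemma LimSup_ln_eventually (u : nat -> R) (M g : R) :
  LimSup_seq u = Finite M -> 0 < M -> 0 < g -> (forall n, 0 < u n) ->
  exists N, forall n, (N <= n)%nat -> ln (u n) < ln M + g.
Proof.
  intros HM HM0 Hg Hpos. destruct (ex_LimSup_seq u) as [l Hl].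
  rewrite (is_LimSup_seq_unique u l Hl) in HM. subst l.
  assert (Hexp : 1 < exp g) by (rewrite <- exp_0; apply exp_increasing, Hg).
  assert (Heps : 0 < M * (exp g - 1)) by nra.
  destruct (proj2 (Hl (mkposreal _ Heps))) as [N HN]. exists N. intros n Hn.
  specialize (HN n Hn). simpl in HN.
  rewrite <- (ln_exp g), <- ln_mult by (try apply exp_pos; lra).
  apply ln_increasing; [apply Hpos|lra].
Qed.

Lemma LimInf_ln_eventually (u : nat -> R) (m g : R) :
  LimInf_seq u = Finite m -> 0 < m -> 0 < g -> (forall n, 0 < u n) ->
  exists N, forall n, (N <= n)%nat -> ln m - g < ln (u n).
Proof.
  intros Hm Hm0 Hg Hpos. destruct (ex_LimInf_seq u) as [l Hl].
  rewrite (is_LimInf_seq_unique u l Hl) in Hm. subst l.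
  assert (Hexp : 0 < exp (- g) < 1) by (split; [apply exp_pos|rewrite <- exp_0; apply exp_increasing; lra]).
  assert (Heps : 0 < m * (1 - exp (- g))) by nra.
  destruct (proj2 (Hl (mkposreal _ Heps))) as [N HN]. exists N. intros n Hn.
  specialize (HN n Hn). simpl in HN.
  replace (ln m - g) with (ln (m * exp (- g))) by (rewrite ln_mult, ln_exp by (try apply exp_pos; lra); ring).
  apply ln_increasing; [nra|lra].
Qed.

Lemma exponent_gap (M m X : R) :
  1 < m <= M -> X > / 2 * (ln M / ln m) ->
  exists g, 0 < g < ln m /\ 0 < 2 * X * (ln m - g) - (ln M + g).
Proof.
  intros Hmm HX.
  assert (Hlm : 0 < ln m) by (rewrite <- ln_1; apply ln_increasing; lra).
  assert (HlM : ln m <= ln M) by (apply ln_le; lra).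
  assert (HX0 : 0 < X).
  { apply Rlt_le_trans with (/ 2 * (ln M / ln m)); [|lra].
    apply Rmult_lt_0_compat; [lra|]. apply Rdiv_lt_0_compat; lra. }
  set (Gp := 2 * X * ln m - ln M).
  assert (HGp : 0 < Gp).
  { apply (Rmult_lt_compat_r (ln m)) in HX; [|exact Hlm].
    replace (/ 2 * (ln M / ln m) * ln m) with (/ 2 * ln M) in HX by (field; lra). unfold Gp. lra. }
  exists (Gp / (2 * (2 * X + 1))). split; [split|].
  - apply Rdiv_lt_0_compat; lra.
  - apply Rmult_lt_reg_r with (2 * (2 * X + 1)); [lra|]. field_simplify; unfold Gp; nra.
  - replace (2 * X * (ln m - Gp / (2 * (2 * X + 1))) - (ln M + Gp / (2 * (2 * X + 1))))
      with (Gp / 2) by (unfold Gp; field; lra). lra.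
Qed.

Section WordGrowth.
Variable a : nat -> nat.
Hypothesis a_pos : forall k, (1 <= a k)%nat.

Lemma ln_conv_q_eventually_le (M g : R) :
  LimSup_seq (conv_root a) = Finite M -> 0 < M -> 0 < g ->
  exists N, forall n, (N <= n)%nat -> (1 <= n)%nat -> ln (INR (conv_q a n)) < INR n * (ln M + g).
Proof.
  intros HM HM0 Hg.
  destruct (LimSup_ln_eventually (conv_root a) M g HM HM0 Hg (conv_root_pos a)) as [N HN].
  exists N. intros n Hn Hn1. rewrite <- ln_conv_root by exact Hn1.
  assert (0 < INR n) by (apply lt_0_INR; lia). specialize (HN n Hn). nra.
Qed.

Lemma ln_conv_q_eventually_ge (m g : R) :
  LimInf_seq (conv_root a) = Finite m -> 0 < m -> 0 < g ->
  exists N, forall n, (N <= n)%nat -> (1 <= n)%nat -> INR n * (ln m - g) < ln (INR (conv_q a n)).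
Proof.
  intros Hm Hm0 Hg.
  destruct (LimInf_ln_eventually (conv_root a) m g Hm Hm0 Hg (conv_root_pos a)) as [N HN].
  exists N. intros n Hn Hn1. rewrite <- ln_conv_root by exact Hn1.
  assert (0 < INR n) by (apply lt_0_INR; lia). specialize (HN n Hn). nra.
Qed.

Variables (r s : nat -> nat) (X : R).
Hypothesis r_unbounded : forall k, (k <= r k)%nat.
Hypothesis s_ge : forall k, X * INR (r k) <= INR (s k).

Lemma growth_of_long_repetition (Big : R) :
  1 <= X -> exists k, (1 <= r k)%nat /\ Big * INR (conv_q a (r k)) <= INR (conv_q a (s k)) ^ 2.
Proof.
  intros HX. destruct (INR_unbounded Big) as [n Hn]. exists (S n).
  pose proof (r_unbounded (S n)) as Hr. split; [lia|].
  assert (Hrs : (r (S n) <= s (S n))%nat).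
  { apply INR_le. pose proof (s_ge (S n)). pose proof (pos_INR (r (S n))). nra. }
  pose proof (le_INR _ _ (conv_q_le_mono a a_pos _ _ Hrs)) as Hqq.
  pose proof (le_INR _ _ (Nat.le_trans _ _ _ Hr (conv_q_ge_index a a_pos (r (S n))))) as Hqr.
  rewrite S_INR in Hqr. pose proof (pos_INR n). nra.
Qed.

Lemma growth_of_exponents (M m Big : R) :
  LimSup_seq (conv_root a) = Finite M -> LimInf_seq (conv_root a) = Finite m ->
  1 < m -> 0 < X -> 1 <= Big ->
  (exists g, 0 < g < ln m /\ 0 < 2 * X * (ln m - g) - (ln M + g)) ->
  exists k, (1 <= r k)%nat /\ Big * INR (conv_q a (r k)) <= INR (conv_q a (s k)) ^ 2.
Proof.
  intros HM Hm Hm1 HX0 HBig [g [[Hg Hgm] Hgap]].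
  set (gap := 2 * X * (ln m - g) - (ln M + g)) in Hgap.
  assert (HM0 : 0 < M) by (pose proof (LimSup_LimInf_seq_le (conv_root a)) as H;
    rewrite HM, Hm in H; simpl in H; lra).
  destruct (ln_conv_q_eventually_le M g HM HM0 Hg) as [N1 HN1].
  destruct (ln_conv_q_eventually_ge m g Hm ltac:(lra) Hg) as [N2 HN2].
  destruct (INR_unbounded (INR N1 + INR N2 / X + ln Big / gap + 1)) as [k Hk].
  pose proof (le_INR _ _ (r_unbounded k)) as Hrk. pose proof (s_ge k) as Hsk.
  set (rk := r k) in *. set (sk := s k) in *.
  assert (0 <= INR N2 / X) by (apply Rdiv_le_0_compat; [apply pos_INR|lra]).
  assert (HlB : 0 <= ln Big) by (rewrite <- ln_1; apply ln_le; lra).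
  assert (HlBG : ln Big / gap * gap = ln Big) by (field; lra).
  assert (0 <= ln Big / gap) by (apply Rdiv_le_0_compat; lra).
  pose proof (pos_INR N1).
  assert (Hr1 : (1 <= rk)%nat) by (apply INR_le; simpl; lra).
  assert (HrN1 : (N1 <= rk)%nat) by (apply INR_le; lra).
  assert (HsN2 : (N2 <= sk)%nat).
  { apply INR_le. replace (INR N2) with (X * (INR N2 / X)) by (field; lra).
    apply Rle_trans with (X * INR rk); [apply Rmult_le_compat_l|]; lra. }
  assert (Hs1 : (1 <= sk)%nat) by (apply (INR_lt 0); simpl; nra).
  exists k. fold rk sk. split; [exact Hr1|].
  specialize (HN1 rk HrN1 Hr1). specialize (HN2 sk HsN2 Hs1).
  assert (ln Big <= INR rk * gap) by nra.
  assert (X * INR rk * (ln m - g) <= INR sk * (ln m - g)) by (apply Rmult_le_compat_r; lra).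
  assert (Hfin : ln Big + ln (INR (conv_q a rk)) < 2 * ln (INR (conv_q a sk))).
  { assert (INR rk * gap = 2 * (X * INR rk * (ln m - g)) - INR rk * (ln M + g))
      by (unfold gap; ring). lra. }
  pose proof (INR_conv_q_ge1 a a_pos rk). pose proof (INR_conv_q_ge1 a a_pos sk).
  rewrite <- ln_mult in Hfin by lra.
  replace (2 * ln (INR (conv_q a sk))) with (ln (INR (conv_q a sk) ^ 2)) in Hfin
    by (rewrite ln_pow by lra; simpl; ring).
  left. apply ln_lt_inv; [nra|apply pow_lt; lra|exact Hfin].
Qed.

End WordGrowth.

Lemma repetition_growth (a : nat -> nat) (alpha kappa : R) (r s : nat -> nat) (X Big : R) :
  (forall k, (1 <= a k)%nat) -> is_lim_seq (convergent a) alpha -> 0 < kappa ->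
  (forall q : nat, (1 <= q)%nat -> kappa <= INR q * dnint (INR q * alpha)) ->
  (forall k, (k <= r k)%nat) -> (forall k, X * INR (r k) <= INR (s k)) -> 0 < X ->
  (1 <= X \/
   X > / 2 * (ln (real (LimSup_seq (conv_root a))) / ln (real (LimInf_seq (conv_root a))))) ->
  1 <= Big ->
  exists k, (1 <= r k)%nat /\ Big * INR (conv_q a (r k)) <= INR (conv_q a (s k)) ^ 2.
Proof.
  intros a_pos alpha_lim kappa_pos bad Hr Hs HX [HX1|HXMm] HBig.
  - exact (growth_of_long_repetition a a_pos r s X Hr Hs Big HX1).
  - destruct (LimSup_LimInf_finite (conv_root a) (exp (ln 2 / 4)) (/ kappa) 2)
      as [M [m [HM [Hm [Hlo Hhi]]]]].
    { intros n Hn. split; [apply conv_root_ge; assumption|].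
      apply (conv_root_le a a_pos alpha kappa); [assumption..|lia]. }
    rewrite HM, Hm in HXMm. simpl in HXMm.
    assert (Htheta : 1 < exp (ln 2 / 4)).
    { rewrite <- exp_0. apply exp_increasing.
      assert (0 < ln 2) by (rewrite <- ln_1; apply ln_increasing; lra). lra. }
    apply (growth_of_exponents a a_pos r s X Hr Hs M m Big); try assumption; try lra.
    apply exponent_gap; [lra|exact HXMm].
Qed.

Lemma le_index_of_increasing (f : nat -> nat) :
  (forall k, (1 <= k)%nat -> (f k < f (S k))%nat) -> forall k, (k <= f (S k))%nat.
Proof.
  intros Hf k. induction k as [|k IH]; [lia|]. specialize (Hf (S k)). lia.
Qed.

Lemma lt_of_sq_bound (P M qr qs eps Big : R) :
  0 <= P -> 0 < eps -> 1 <= qr -> P ^ 2 * qs ^ 2 <= M * qr -> Big * qr <= qs ^ 2 ->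
  M / (eps * eps) < Big -> P < eps.
Proof.
  intros HP Heps Hqr Hbound Hgrow HBig.
  assert (HM : 0 <= M).
  { assert (0 <= P ^ 2 * qs ^ 2) by (apply Rmult_le_pos; apply pow2_ge_0).
    destruct (Rle_lt_dec 0 M) as [H0|H0]; [exact H0|]. nra. }
  assert (HP2 : P ^ 2 * Big <= M).
  { apply Rmult_le_reg_r with qr; [lra|].
    apply Rle_trans with (P ^ 2 * qs ^ 2); [|exact Hbound].
    rewrite Rmult_assoc. apply Rmult_le_compat_l; [apply pow2_ge_0|exact Hgrow]. }
  assert (M < Big * (eps * eps)) by (apply Rmult_lt_reg_r with (/ (eps * eps));
    [apply Rinv_0_lt_compat; nra|]; rewrite Rmult_assoc, Rinv_r by nra; lra).
  destruct (Rlt_le_dec P eps) as [Hlt|Hge]; [exact Hlt|]. exfalso.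
  assert (eps * eps <= P ^ 2) by nra.
  assert (0 <= M / (eps * eps)) by (apply Rdiv_le_0_compat; nra).
  nra.
Qed.

Theorem theorem4 (alpha : R) (a : nat -> nat) (x : Q) (U : nat -> list nat) :
  is_cf_expansion alpha a ->
  Bad alpha ->
  (0 < x)%Q ->
  (forall k, (1 <= k)%nat -> begins_with a (U k ++ word_pow (U k) x)) ->
  (forall k, (1 <= k)%nat -> (length (U k) < length (U (S k)))%nat) ->
  (1 <= Q2R x \/
   Q2R x > / 2 *
     (ln (real (LimSup_seq (fun l => Rpower (INR (conv_q a l)) (/ INR l))))
      / ln (real (LimInf_seq (fun l => Rpower (INR (conv_q a l)) (/ INR l)))))) ->
  forall beta : R, homography_equiv alpha beta ->
  forall eps : R, 0 < eps ->
  exists q : nat, (1 <= q)%nat /\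
    INR q * dnint (INR q * alpha) * dnint (INR q * beta) < eps.
Proof.
  intros [a_pos alpha_lim] [kappa [kappa_pos bad]] Hx Hbegin Hlen Hcase
    beta [za [zb [zc [zd [Hdet ->]]]]] eps Heps.
  destruct (repetition_small_product alpha kappa kappa_pos bad za zb zc zd Hdet a a_pos alpha_lim)
    as [M [HM Hsmall]].
  set (r := fun k => length (U (S k))). set (s := fun k => length (word_pow (U (S k)) x)).
  assert (HX : 0 < Q2R x)
    by (apply Qlt_Rlt in Hx; replace (Q2R 0) with 0 in Hx by (unfold Q2R; simpl; ring); exact Hx).
  set (Big := M * M + M / (eps * eps) + 1).
  assert (HMe : 0 <= M / (eps * eps)) by (apply Rdiv_le_0_compat; nra).
  destruct (repetition_growth a alpha kappa r s (Q2R x) Big a_pos alpha_lim kappa_pos bad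
              (le_index_of_increasing _ Hlen) (fun k => length_word_pow_ge (U (S k)) x Hx) HX Hcase)
    as [k [Hr1 Hgrow]]; [unfold Big; nra|].
  assert (Hshift : forall j, (j < s k)%nat -> a (S (r k - 1) + j)%nat = a j).
  { intros j Hj. replace (S (r k - 1)) with (r k) by lia.
    apply (begins_with_shift a _ x); [apply Hbegin; lia|exact Hj]. }
  pose proof (INR_conv_q_ge1 a a_pos (r k)). pose proof (INR_conv_q_ge1 a a_pos (s k)).
  assert (HMs : M <= INR (conv_q a (s k))).
  { assert (M * M < INR (conv_q a (s k)) ^ 2) by (unfold Big in Hgrow; nra). nra. }
  destruct (Hsmall (r k - 1)%nat (s k) Hshift HMs) as [q [Hq Hbound]].
  exists q. split; [exact Hq|].
  replace (S (r k - 1)) with (r k) in Hbound by lia.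
  apply (lt_of_sq_bound _ M (INR (conv_q a (r k))) (INR (conv_q a (s k))) eps Big);
    [|exact Heps|lra|exact Hbound|exact Hgrow|unfold Big; nra].
  apply Rmult_le_pos; [apply Rmult_le_pos|]; try apply dnint_nonneg; apply pos_INR.
Qed.
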